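(* Let $m\ge1$ and $\mathfrak{g}_m=\mathfrak{sl}(2)\ltimes V(m)$. Let $V$ and $W$ be uniserial $\mathfrak{g}_m$-modules with socle decompositions $V=V(a_0)\oplus\cdots\oplus V(a_\ell)$ and $W=V(b_0)\oplus\cdots\oplus V(b_{\ell'})$, where $\ell,\ell'\ge1$. Let $v_0\in V(a_{i_0})\otimes V(b_{j_0})\subset V\otimes W$ be a highest weight vector (for $\mathfrak{sl}(2)$). For $s=0,\dots,m$ let $(e_sv_0)_1$ denote the component of $e_sv_0$ in $V(a_{i_0-1})\otimes V(b_{j_0})$ and $(e_sv_0)_2$ its component in $V(a_{i_0})\otimes V(b_{j_0-1})$ (with respect to the decomposition $V\otimes W=\bigoplus_{i,j}V(a_i)\otimes V(b_j)$; these components are $0$ when $i_0=0$, resp. $j_0=0$). Then: (i) $(e_sv_0)_1=0$ for all $s=0,\dots,m$ if and only if $i_0=0$; (ii) $(e_sv_0)_2=0$ for all $s=0,\dots,m$ if and only if $j_0=0$.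
   Context: $\mathbb{F}$ is a field of characteristic zero; all modules are finite dimensional. $\{e,h,f\}$ is the standard basis of $\mathfrak{sl}(2)$ and $V(a)$ denotes the irreducible $\mathfrak{sl}(2)$-module of highest weight $a\ge0$ (dimension $a+1$). $\mathfrak{g}_m=\mathfrak{sl}(2)\ltimes V(m)$ where $\mathfrak{r}=V(m)$ is an abelian ideal on which $\mathfrak{sl}(2)$ acts as on $V(m)$; $\{e_0,\dots,e_m\}$ is a basis of $\mathfrak{r}=V(m)$ consisting of $h$-weight vectors ($e_s$ of weight $m-2s$). A module is uniserial if it has a unique composition series, i.e. its socle series $0=\mathrm{soc}^0\subset\mathrm{soc}^1\subset\cdots\subset\mathrm{soc}^n=V$ has irreducible factors. A socle decomposition of a uniserial $\mathfrak{g}_m$-module $V$ of composition length $\ell+1$ is a decomposition $V=V(a_0)\oplus\cdots\oplus V(a_\ell)$ into irreducible $\mathfrak{sl}(2)$-submodules such that $\mathrm{soc}^{k}(V)=V(a_0)\oplus\cdots\oplus V(a_{k-1})$ for all $k$ (so $V(a_{k})\cong\mathrm{soc}^{k+1}(V)/\mathrm{soc}^{k}(V)$ and $\mathfrak{r}V(a_k)\subset V(a_0)\oplus\cdots\oplus V(a_{k-1})$). A highest weight vector is a nonzero $h$-eigenvector annihilated by $e$. *)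

(* Finite-dimensional modules over g_m = sl(2) ⋉ V(m) are
   encoded concretely: a module of dimension n is F^n = 'rV[F]_n, each element
   x of g_m acts by v |-> v *m A_x (right multiplication of row vectors), so
   subspaces are row spaces (mxalgebra, scope %MS). *)
From HB Require Import structures.
From mathcomp Require Import all_boot all_order all_algebra.
From mathcomp Require Import mxtens.
Set Implicit Arguments. Unset Strict Implicit. Unset Printing Implicit Defensive.
Import GRing.Theory.
Local Open Scope ring_scope.

(* Data of a representation of g_m on F^n: matrices for e, h, f of sl(2) and
   for the basis e_0,...,e_m of the abelian ideal r = V(m). *)
Record gmod (F : fieldType) (m n : nat) := GMod {
  gE : 'M[F]_n; gH : 'M[F]_n; gF : 'M[F]_n; gX : 'I_m.+1 -> 'M[F]_n }.

(* Matrix of the bracket [x,y] for the right-multiplication encoding: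
   (v *m A_y) *m A_x = x.(y.v), hence A_[x,y] = A_y A_x - A_x A_y. *)
Definition rbr (F : fieldType) n (Ax Ay : 'M[F]_n) : 'M[F]_n :=
  Ay *m Ax - Ax *m Ay.

Definition is_gmod (F : fieldType) m n (M : gmod F m n) : Prop :=
  [/\ rbr (gH M) (gE M) = (gE M) *+ 2,
      rbr (gH M) (gF M) = - (gF M) *+ 2 &
      rbr (gE M) (gF M) = gH M] /\
  [/\ forall s : 'I_m.+1, rbr (gH M) (gX M s) = (m%:R - (s.*2)%N%:R) *: gX M s,
      forall s : 'I_m.+1,
        rbr (gE M) (gX M s) = (s * (m - s).+1)%N%:R *: gX M (inord s.-1),
      forall s : 'I_m.+1,
        rbr (gF M) (gX M s) = if (s < m)%N then gX M (inord s.+1) else 0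
    & forall s t : 'I_m.+1, rbr (gX M s) (gX M t) = 0].

Definition tens (F : fieldType) m n p (V : gmod F m n) (W : gmod F m p)
  : gmod F m (n * p) :=
  GMod (gE V *t (1%:M : 'M_p) + (1%:M : 'M_n) *t gE W)
       (gH V *t (1%:M : 'M_p) + (1%:M : 'M_n) *t gH W)
       (gF V *t (1%:M : 'M_p) + (1%:M : 'M_n) *t gF W)
       (fun s => gX V s *t (1%:M : 'M_p) + (1%:M : 'M_n) *t gX W s).

Definition sl2_mats (F : fieldType) m n (M : gmod F m n) : seq 'M[F]_n :=
  [:: gE M; gH M; gF M].
Definition g_mats (F : fieldType) m n (M : gmod F m n) : seq 'M[F]_n :=
  sl2_mats M ++ [seq gX M s | s <- enum 'I_m.+1].

Definition stable_all (F : fieldType) n (As : seq 'M[F]_n) (U : 'M[F]_n) :=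
  all (fun A => stablemx U A) As.

Definition simple_over (F : fieldType) n (As : seq 'M[F]_n) (S U : 'M[F]_n)
  : Prop :=
  [/\ stable_all As U, (S < U)%MS &
      forall W : 'M[F]_n, stable_all As W -> (S <= W)%MS -> (W <= U)%MS ->
        (W == S)%MS \/ (W == U)%MS].

(* soc is the socle series: soc 0 = 0 and soc (k+1) is the sum of soc k and
   all submodules U ⊇ soc k with U/soc k simple (i.e. soc(V/soc k) pulled
   back), expressed as a least upper bound of row spaces. *)
Definition is_socle_series (F : fieldType) m n (M : gmod F m n)
  (soc : nat -> 'M[F]_n) : Prop :=
  (soc 0%N == (0 : 'M[F]_n))%MS /\
  forall k : nat,
    [/\ (soc k <= soc k.+1)%MS,
        (forall U, simple_over (g_mats M) (soc k) U -> (U <= soc k.+1)%MS) &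
        (forall Z : 'M[F]_n, (soc k <= Z)%MS ->
           (forall U, simple_over (g_mats M) (soc k) U -> (U <= Z)%MS) ->
           (soc k.+1 <= Z)%MS)].

Definition uniserial (F : fieldType) m n (M : gmod F m n) : Prop :=
  exists soc, is_socle_series M soc /\
  exists N : nat, (soc N == 1%:M)%MS /\
    forall k, (k < N)%N -> simple_over (g_mats M) (soc k) (soc k.+1).

Definition irr_sl2_sub (F : fieldType) m n (M : gmod F m n) (U : 'M[F]_n) :=
  simple_over (sl2_mats M) 0 U.

(* Socle decomposition V = V(a_0) ⊕ ... ⊕ V(a_l), the summand V(a_i) being
   the row space of U i (an irreducible sl(2)-submodule of dimension a_i+1),
   with soc^k(V) = V(a_0) ⊕ ... ⊕ V(a_{k-1}) for all k <= l+1. *)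
Definition socle_decomposition (F : fieldType) m n (M : gmod F m n)
  (l : nat) (a : nat -> nat) (U : nat -> 'M[F]_n) : Prop :=
  [/\ forall i, (i <= l)%N -> irr_sl2_sub M (U i) /\ \rank (U i) = (a i).+1,
      mxdirect (\sum_(i < l.+1) U i),
      (\sum_(i < l.+1) U i == 1%:M)%MS &
      exists soc, is_socle_series M soc /\
        forall k, (k <= l.+1)%N -> (soc k == \sum_(i < k) U i)%MS].

Definition highest_weight (F : fieldType) m n (M : gmod F m n) (v : 'rV[F]_n)
  : Prop :=
  [/\ v != 0, exists c : F, v *m gH M = c *: v & v *m gE M = 0].

(* component of x in the summand U i ⊗ U' j of
   V ⊗ W = ⊕_{i<=l, j<=l'} U i ⊗ U' j (projection along the other summands);
   0 if (i,j) is out of range *)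
Definition tcomp (F : fieldType) n p (l l' : nat)
  (U : nat -> 'M[F]_n) (U' : nat -> 'M[F]_p) (i j : nat) (x : 'rV[F]_(n * p))
  : 'rV[F]_(n * p) :=
  if (i <= l)%N && (j <= l')%N then
    x *m proj_mx (U i *t U' j)
      (\sum_(ij : 'I_l.+1 * 'I_l'.+1 | (ij.1 : nat, ij.2 : nat) != (i, j))
          (U ij.1 *t U' ij.2))%MS
  else 0.

Definition comp1 (F : fieldType) n p l l' (U : nat -> 'M[F]_n)
  (U' : nat -> 'M[F]_p) (i0 j0 : nat) (x : 'rV[F]_(n * p)) :=
  if i0 is i.+1 then tcomp l l' U U' i j0 x else 0.

Definition comp2 (F : fieldType) n p l l' (U : nat -> 'M[F]_n)
  (U' : nat -> 'M[F]_p) (i0 j0 : nat) (x : 'rV[F]_(n * p)) :=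
  if j0 is j.+1 then tcomp l l' U U' i0 j x else 0.

(* For i0 = k+1, the component (e_s v0)_1 equals v0 (e_s P_k ⊗ 1),
   where P_k is the projection of V onto V(a_k) along the other summands.
   Slicing v0 along the coordinates of W reduces (i) to the injectivity of
   u ↦ (e_s u P_k)_s on V(a_{k+1}).  Its kernel is an sl(2)-submodule of the
   irreducible V(a_{k+1}); if it were everything, r V(a_{k+1}) ⊆ soc^k(V) and
   soc^k(V) + V(a_{k+1}) would be a submodule with simple quotient over
   soc^k(V), hence inside soc^{k+1}(V), which is absurd.  This uses that r maps
   soc^{k+1} into soc^k, i.e. acts trivially on simple subquotients: the e_s
   are commuting nilpotent operators normalised by g_m (nilpotency of e_s,
   s < m, comes from Jacobson's lemma applied to e and e_{s+1}). *)

From HB Require Import structures.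
From mathcomp Require Import all_boot all_order all_algebra.
From mathcomp Require Import mxtens.
Set Implicit Arguments. Unset Strict Implicit. Unset Printing Implicit Defensive.
Import GRing.Theory.
Local Open Scope ring_scope.

Lemma pchar0_natf_inj (F : fieldType) :
  [pchar F] =i pred0 -> injective (fun k : nat => k%:R : F).
Proof.
move=> /pcharf0P F0.
have le_eq k l : k%:R = l%:R :> F -> (k <= l)%N -> l = k.
  move=> + le_kl; rewrite -(subnKC le_kl) natrD -[X in X = _]addr0.
  by move=> /addrI/esym/eqP; rewrite F0 => /eqP->; rewrite addn0.
move=> i j /= eq_ij.
by case: (leqP i j) => [/(le_eq _ _ eq_ij)->|/ltnW/(le_eq _ _ (esym eq_ij))].
Qed.

Definition ad (R : pzRingType) (a y : R) := a * y - y * a.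

Section InnerDerivation.
Variables (R : pzRingType) (a : R).

Lemma ad0 : ad a 0 = 0.
Proof. by rewrite /ad mulr0 mul0r subrr. Qed.

Lemma ad1 : ad a 1 = 0.
Proof. by rewrite /ad mulr1 mul1r subrr. Qed.

Lemma adD x y : ad a (x + y) = ad a x + ad a y.
Proof. by rewrite /ad mulrDr mulrDl opprD addrACA. Qed.

Lemma adMn x k : ad a (x *+ k) = ad a x *+ k.
Proof. by rewrite /ad mulrnAr mulrnAl mulrnBl. Qed.

Lemma adM x y : ad a (x * y) = ad a x * y + x * ad a y.
Proof. by rewrite /ad mulrBl mulrBr !mulrA addrA subrK. Qed.

Lemma iter_ad0 k : iter k (ad a) 0 = 0.
Proof. by elim: k => //= k ->; rewrite ad0. Qed.

Variable b : R.
Hypothesis ad2b : ad a (ad a b) = 0.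

Lemma iter_ad_mulr x j :
  iter j.+1 (ad a) (x * b) = iter j.+1 (ad a) x * b + (iter j (ad a) x * ad a b) *+ j.+1.
Proof.
elim: j => [|j IH]; first by rewrite /= adM.
by rewrite iterS IH adD adMn !adM ad2b mulr0 addr0 -addrA -mulrS -!iterS.
Qed.

Lemma iter_ad_exp_gt k j : (k < j)%N -> iter j (ad a) (b ^+ k) = 0.
Proof.
elim: k j => [|k IH] [|j] // lt_kj; first by rewrite iterSr ad1 iter_ad0.
by rewrite exprSr iter_ad_mulr !IH ?mul0r ?mul0rn ?addr0 // ltnW.
Qed.

(* Each of the [k] derivations must hit a different factor [b], as [ad a] kills [ad a b]. *)
Lemma iter_ad_exp k : iter k (ad a) (b ^+ k) = (ad a b) ^+ k *+ k`!.
Proof.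
elim: k => [|k IH]; first by rewrite expr0.
rewrite exprSr iter_ad_mulr iter_ad_exp_gt // mul0r add0r IH.
by rewrite mulrnAl -exprSr -mulrnA mulnC.
Qed.

End InnerDerivation.

Lemma adZl (F : fieldType) n (c : F) (A Y : 'M[F]_n) : ad (c *: A) Y = c *: ad A Y.
Proof. by rewrite /ad -!mulmxE -scalemxAl -scalemxAr scalerBr. Qed.

Lemma ad_nilpotent (F : fieldType) (hF : [pchar F] =i pred0) n (A B : 'M[F]_n) k :
  ad A (ad A B) = 0 -> B ^+ k = 0 -> (ad A B) ^+ k = 0.
Proof.
move=> ad2B Bk0; have := iter_ad_exp ad2B k.
rewrite Bk0 iter_ad0 -scaler_nat => /esym/eqP.
by rewrite scaler_eq0 ((pcharf0P F).1 hF) (negbTE (lt0n_neq0 (fact_gt0 k))) => /eqP.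
Qed.

Lemma ad_eigen_nilpotent (F : fieldType) (hF : [pchar F] =i pred0) n (H Y : 'M[F]_n) c :
  c != 0 -> ad H Y = c *: Y -> Y ^+ (n * n) = 0.
Proof.
move=> c_neq0 adHY.
have adHYk k : ad H (Y ^+ k) = (k%:R * c) *: Y ^+ k.
  elim: k => [|k IH]; first by rewrite ad1 mul0r scale0r.
  rewrite exprSr adM IH adHY -!mulmxE -scalemxAl -scalemxAr -scalerDl mulrSr mulrDl mul1r.
  by rewrite addrC.
pose G : 'M[F]_(n * n) := lin_mulmx H - lin_mulmxr H.
have GE (Z : 'M[F]_n) : mxvec Z *m G = mxvec (ad H Z).
  by rewrite mulmxBr !mul_vec_lin /= linearB /= -!mulmxE.
apply/eqP; apply: contraT => Yn_neq0; pose N := (n * n).+1.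
have Yk_neq0 (k : 'I_N) : Y ^+ k != 0.
  apply: contra Yn_neq0 => /eqP Yk0.
  by rewrite -(subnKC (_ : k <= n * n)%N) ?exprD ?Yk0 ?mul0r // -ltnS.
pose ev (k : 'I_N) := k%:R * c.
have ev_inj : {in predT &, injective ev}.
  move=> i j _ _ /(mulIf c_neq0)/pchar0_natf_inj-/(_ hF).
  exact: val_inj.
have /mxdirectP/= dir := mxdirect_sum_eigenspace G ev_inj.
have rank_ge1 (k : 'I_N) : (1 <= \rank (eigenspace G (ev k)))%N.
  have: (mxvec (Y ^+ k) <= eigenspace G (ev k))%MS.
    by apply/eigenspaceP; rewrite GE adHYk linearZ.
  by move/mxrankS; apply: leq_trans; rewrite rank_rV mxvec_eq0 Yk_neq0.
have: (N <= \sum_(k < N) \rank (eigenspace G (ev k)))%N.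
  by rewrite -[X in (X <= _)%N]card_ord -sum1_card; apply: leq_sum.
by rewrite -dir => /leq_trans/(_ (rank_leq_col _)); rewrite ltnn.
Qed.

Section RowSpaces.
Variables (F : fieldType) (n : nat).
Implicit Types (S T Y : 'M[F]_n).

Lemma stablemxX S Y k : stablemx S Y -> stablemx S (Y ^+ k).
Proof.
move=> SY; elim: k => [|k IH]; first by rewrite expr0 mulmx1.
by rewrite exprS -mulmxE stablemxM.
Qed.

(* Treat the [Y i] one at a time, replacing [w] by [w Y_j^r] for the last [r]
   with [w Y_j^r] outside [S]. *)
Lemma common_null_vector q (Y : 'I_q -> 'M[F]_n) S T :
  (forall i j, Y i *m Y j = Y j *m Y i) -> (forall i, exists k, Y i ^+ k = 0) ->
  (forall i, stablemx S (Y i)) -> (forall i, stablemx T (Y i)) -> ~~ (T <= S)%MS ->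
  exists2 w : 'rV_n, (w <= T)%MS && ~~ (w <= S)%MS & forall i, (w *m Y i <= S)%MS.
Proof.
move=> Ycomm Ynil SY TY not_TS.
suff first_j j : (j <= q)%N -> exists2 w : 'rV_n, (w <= T)%MS && ~~ (w <= S)%MS &
    forall i : 'I_q, (i < j)%N -> (w *m Y i <= S)%MS.
  by have [w wTS wY] := first_j q (leqnn q); exists w => // i; apply: wY.
elim: j => [_|j IH lt_jq].
  by have /row_subPn[i Ti_S] := not_TS; exists (row i T); rewrite ?row_sub.
have [w /andP[wT wS] wY] := IH (ltnW lt_jq).
pose y := Y (Ordinal lt_jq).
have exS : exists k, (w *m y ^+ k <= S)%MS.
  by have [k yk0] := Ynil (Ordinal lt_jq); exists k; rewrite yk0 mulmx0 sub0mx.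
case: (ex_minnP exS) => [[|r]]; first by rewrite expr0 mulmx1 (negbTE wS).
move=> wyr_S r_min; exists (w *m y ^+ r).
  rewrite (submx_trans (submxMr _ wT) (stablemxX _ (TY _))) /=.
  by apply/negP => /r_min; rewrite ltnn.
move=> i; rewrite ltnS leq_eqVlt => /predU1P[eq_ij | lt_ij].
  have -> : i = Ordinal lt_jq by exact: val_inj.
  by rewrite -/y -mulmxA mulmxE -exprSr.
have yY : GRing.comm (Y i) y by rewrite /GRing.comm -!mulmxE Ycomm.
rewrite -mulmxA mulmxE -(commrX r yY) -mulmxE mulmxA.
exact: submx_trans (submxMr _ (wY i lt_ij)) (stablemxX _ (SY _)).
Qed.

Definition preimmx Y S : 'M[F]_n := kermx (Y *m cokermx S).

Lemma sub_preimmx k (w : 'M_(k, n)) Y S : (w <= preimmx Y S)%MS = (w *m Y <= S)%MS.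
Proof. by rewrite [RHS]submxE -mulmxA; apply/sub_kermxP/eqP. Qed.

Definition common_preimmx q T (Y : 'I_q -> 'M[F]_n) S : 'M[F]_n :=
  (T :&: \bigcap_(i < q) preimmx (Y i) S)%MS.

Lemma sub_common_preimmx k (w : 'M_(k, n)) q T (Y : 'I_q -> 'M_n) S :
  (w <= common_preimmx T Y S)%MS = (w <= T)%MS && [forall i, w *m Y i <= S]%MS.
Proof.
rewrite sub_capmx; congr (_ && _); apply/sub_bigcapmxP/forallP => wY i.
  by rewrite -sub_preimmx wY.
by rewrite sub_preimmx wY.
Qed.

Lemma stablemx_common_preimmx q T (Y : 'I_q -> 'M_n) S y :
  stablemx T y -> stablemx S y ->
  (forall i, exists c j, y *m Y i = Y i *m y - c *: Y j) ->
  stablemx (common_preimmx T Y S) y.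
Proof.
move=> Ty Sy yY; set Z := common_preimmx T Y S.
have /andP[ZT /forallP ZY] : (Z <= T)%MS && [forall i, Z *m Y i <= S]%MS.
  by rewrite -sub_common_preimmx.
rewrite sub_common_preimmx (submx_trans (submxMr _ ZT) Ty) /=.
apply/forallP => i; have [c [j yYi]] := yY i.
rewrite -mulmxA yYi mulmxBr mulmxA addmx_sub ?(submx_trans (submxMr _ (ZY i))) //.
by rewrite eqmx_opp -scalemxAr scalemx_sub.
Qed.

End RowSpaces.

Lemma simple_over_addsmx (F : fieldType) n (As Bs : seq 'M[F]_n) (S U : 'M[F]_n) :
  {subset As <= Bs} -> simple_over As 0 U -> stable_all Bs (S + U)%MS ->
  ~~ (U <= S)%MS -> simple_over Bs S (S + U)%MS.
Proof.
move=> sAB [/allP stU _ minU] stSU not_US; split=> //.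
  by rewrite ltmxE addsmxSl addsmx_sub negb_and not_US orbT.
move=> W /allP stW le_SW le_W_SU.
have stUW : stable_all As (U :&: W)%MS.
  apply/allP => y Ay; rewrite sub_capmx.
  rewrite (submx_trans (submxMr _ (capmxSl _ _)) (stU y Ay)).
  by rewrite (submx_trans (submxMr _ (capmxSr _ _)) (stW y (sAB y Ay))).
have W_E : (W :=: S + (U :&: W))%MS.
  exact: eqmx_trans (eqmx_sym (capmx_idPr le_W_SU)) (eqmx_sym (matrix_modl _ le_SW)).
case: (minU _ stUW (sub0mx _ _) (capmxSl _ _)) => /andP[UW_0 U_UW].
  left; rewrite /eqmx W_E addsmx_sub submx_refl le_SW.
  by rewrite (submx_trans UW_0 (sub0mx _ _)).
by right; rewrite /eqmx le_W_SU addsmx_sub le_SW (submx_trans U_UW (capmxSr _ _)).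
Qed.

Section GModule.
Variables (F : fieldType) (m n : nat) (M : gmod F m n).
Hypothesis hM : is_gmod M.
Local Notation E := (gE M).
Local Notation H := (gH M).
Local Notation X := (gX M).

Lemma gX_comm s t : X s *m X t = X t *m X s.
Proof. by case: hM => _ [_ _ _ /(_ s t)/eqP]; rewrite subr_eq0 => /eqP. Qed.

Lemma sl2_sub_g_mats : {subset sl2_mats M <= g_mats M}.
Proof. by move=> y; rewrite mem_cat => ->. Qed.

Lemma gX_in_g_mats s : X s \in g_mats M.
Proof. by rewrite mem_cat map_f ?orbT ?mem_enum. Qed.

Lemma g_matsP y : y \in g_mats M -> y \in sl2_mats M \/ exists s, y = X s.
Proof. by rewrite mem_cat => /orP[|/mapP[s _ ->]]; [left | right; exists s]. Qed.

Lemma gX_ideal y s : y \in g_mats M ->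
  exists (c : F) (s' : 'I_m.+1), y *m X s = X s *m y - c *: X s'.
Proof.
have [[_ _ _] [HX EX FX _]] := hM.
have swap c s' A : rbr A (X s) = c *: X s' -> A *m X s = X s *m A - c *: X s'.
  by rewrite /rbr => <-; rewrite opprB addrC subrK.
case/g_matsP => [|[t ->]]; last by exists 0, s; rewrite scale0r subr0 gX_comm.
rewrite !inE => /or3P[]/eqP->.
- by exists (s * (m - s).+1)%:R, (inord s.-1); apply: swap.
- by exists (m%:R - (s.*2)%:R), s; apply: swap.
- have := FX s; case: ifP => _ FXs.
    by exists 1, (inord s.+1); apply: swap; rewrite scale1r.
  by exists 0, s; apply: swap; rewrite scale0r.
Qed.

Variables (hF : [pchar F] =i pred0) (hm : (1 <= m)%N).

Lemma gE_nilpotent : E ^+ (n * n) = 0.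
Proof.
apply: (ad_eigen_nilpotent hF (H := H) (c := -2)).
  by rewrite oppr_eq0 ((pcharf0P F).1 hF).
by case: hM => [[HE _ _] _]; rewrite /ad -!mulmxE -opprB [_ - _]HE scaleNr scaler_nat.
Qed.

(* For [s < m], [e_s] is a nonzero multiple of [ad e_{s+1} e], which commutes
   with [e_{s+1}]; as [e] is nilpotent, so is [e_s].  The [h]-weight of [e_m] is
   [-m], which is nonzero. *)
Lemma gX_nilpotent s : X s ^+ (n * n) = 0.
Proof.
have [[_ _ _] [HX EX _ _]] := hM.
case: (ltnP s m) => [lt_sm | le_ms].
  pose t : 'I_m.+1 := inord s.+1; pose c : F := (s.+1 * (m - s))%:R.
  have c_neq0 : c != 0 by rewrite ((pcharf0P F).1 hF) muln_eq0 subn_eq0 negb_or -ltnNge lt_sm.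
  have adXtE : ad (X t) E = c *: X s.
    by rewrite /ad -!mulmxE [_ - _]EX /t inordK // subnSK //= inord_val.
  have := ad_nilpotent hF (A := c^-1 *: X t) (B := E) _ gE_nilpotent.
  rewrite !adZl adXtE !scalerA mulVf // !scale1r; apply.
  by rewrite /ad -!mulmxE gX_comm subrr scaler0.
have eq_sm : (s : nat) = m by apply/eqP; rewrite eqn_leq le_ms andbT -ltnS ltn_ord.
apply: (ad_eigen_nilpotent hF (H := H) (c := m%:R)).
  by rewrite ((pcharf0P F).1 hF) -lt0n.
by rewrite /ad -!mulmxE -opprB [_ - _]HX eq_sm -addnn natrD -scaleNr opprB addrK.
Qed.

(* Commuting nilpotent operators normalised by [g_m] have a common null vector
   in [T/S], and their common null space there is a submodule. *)
Lemma simple_quotient_gX S T s : stable_all (g_mats M) S ->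
  simple_over (g_mats M) S T -> (T *m X s <= S)%MS.
Proof.
move=> /allP stS [/allP stT ltST minT].
pose Z := common_preimmx T X S.
have stZ : stable_all (g_mats M) Z.
  apply/allP => y gy; apply: stablemx_common_preimmx; [exact: stT|exact: stS|].
  by move=> i; apply: gX_ideal.
have /andP[le_ST not_TS] := ltST.
have le_SZ : (S <= Z)%MS.
  by rewrite sub_common_preimmx le_ST; apply/forallP => i; apply: stS; apply: gX_in_g_mats.
case: (minT Z stZ le_SZ (capmxSl _ _)) => /andP[le_ZS le_TZ].
  have [i|i|i|w /andP[wT wS] wS_X] := common_null_vector gX_comm _ _ _ not_TS.
  - by exists (n * n)%N; apply: gX_nilpotent.
  - by apply: stS; apply: gX_in_g_mats.
  - by apply: stT; apply: gX_in_g_mats.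
  have wZ : (w <= Z)%MS by rewrite sub_common_preimmx wT; apply/forallP.
  by rewrite (submx_trans wZ le_ZS) in wS.
by move: le_TZ; rewrite sub_common_preimmx => /andP[_ /forallP].
Qed.

Section SocleSeries.
Variables (soc : nat -> 'M[F]_n) (hsoc : is_socle_series M soc).

Lemma socle_series_stable k : stable_all (g_mats M) (soc k).
Proof.
have [soc0 socS] := hsoc; apply/allP => y gy; elim: k => [|k IH].
  by move/andP: soc0 => [+ _]; rewrite submx0 => /eqP->; rewrite mul0mx sub0mx.
have [le_k_k1 sup lub] := socS k; rewrite -sub_preimmx; apply: lub.
  by rewrite sub_preimmx (submx_trans IH).
move=> U simU; have [/allP stU _ _] := simU.
by rewrite sub_preimmx (submx_trans (stU y gy)) ?sup.
Qed.

Lemma socle_series_gX k s : (soc k.+1 *m X s <= soc k)%MS.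
Proof.
have [_ /(_ k)[_ _ lub]] := hsoc; rewrite -sub_preimmx; apply: lub.
  by rewrite sub_preimmx; move/allP: (socle_series_stable k); apply; apply: gX_in_g_mats.
by move=> U simU; rewrite sub_preimmx simple_quotient_gX ?socle_series_stable.
Qed.

End SocleSeries.
End GModule.

Fact summand_proj_key : unit. Proof. by []. Qed.

Definition summand_proj (F : fieldType) n l (U : nat -> 'M[F]_n) (i : nat) : 'M[F]_n :=
  locked_with summand_proj_key (proj_mx (U i) (\sum_(j < l.+1 | (j : nat) != i) U j)%MS).

Lemma summand_projE (F : fieldType) n l (U : nat -> 'M[F]_n) i :
  summand_proj l U i = proj_mx (U i) (\sum_(j < l.+1 | (j : nat) != i) U j)%MS.
Proof. exact: locked_withE. Qed.

Lemma summand_proj_sub (F : fieldType) n l (U : nat -> 'M[F]_n) i :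
  (summand_proj l U i <= U i)%MS.
Proof. by rewrite -[summand_proj _ _ _]mul1mx summand_projE proj_mx_sub. Qed.

Section SocleDecomposition.
Variables (F : fieldType) (m n : nat) (M : gmod F m n).
Variables (l : nat) (a : nat -> nat) (U : nat -> 'M[F]_n).
Hypothesis dU : socle_decomposition M l a U.
Local Notation P := (summand_proj l U).
Local Notation X := (gX M).

Lemma summand_neq0 i : (i <= l)%N -> U i != 0.
Proof. by have [irr _ _ _] := dU => /irr[_ rkU]; rewrite -mxrank_eq0 rkU. Qed.

Lemma summand_stable i y : (i <= l)%N -> y \in sl2_mats M -> stablemx (U i) y.
Proof. by have [irr _ _ _] := dU => /irr[[/allP stU _ _] _]; apply: stU. Qed.

Lemma summand_irr i : (i <= l)%N -> irr_sl2_sub M (U i).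
Proof. by have [irr _ _ _] := dU => /irr[]. Qed.

Lemma summand_cap_eq0 i : (i <= l)%N ->
  (U i :&: \sum_(j < l.+1 | (j : nat) != i) U j)%MS = 0.
Proof.
have [_ /mxdirect_sumsP dir _ _] := dU; rewrite -ltnS => lt_il.
rewrite (eq_bigl (fun j : 'I_l.+1 => j != Ordinal lt_il)).
  exact: (dir (Ordinal lt_il) isT).
by move=> j; rewrite -val_eqE.
Qed.

Lemma summand_proj_id i k (w : 'M_(k, n)) : (i <= l)%N -> (w <= U i)%MS -> w *m P i = w.
Proof. by rewrite summand_projE; move/summand_cap_eq0; apply: proj_mx_id. Qed.

Lemma summand_proj_eq0 i j k (w : 'M_(k, n)) : (i <= l)%N -> (j <= l)%N -> j != i ->
  (w <= U j)%MS -> w *m P i = 0.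
Proof.
rewrite -(ltnS j) summand_projE => le_il lt_jl neq_ji wU.
apply: proj_mx_0; first exact: summand_cap_eq0.
exact: (sumsmx_sup (Ordinal lt_jl) _ wU).
Qed.

Lemma sum_summand_proj : \sum_(i < l.+1) P i = 1%:M.
Proof.
have [_ _ /andP[_ /sub_sumsmxP[u defI]] _] := dU.
rewrite [RHS]defI; apply: eq_bigr => i _.
rewrite -[P i]mul1mx defI mulmx_suml (bigD1 i) //= big1 ?addr0.
  by rewrite -mulmxA summand_proj_id // -ltnS.
by move=> j neq_ji; rewrite -mulmxA (summand_proj_eq0 (j := j)) ?mulmx0 // -ltnS.
Qed.

Lemma summand_proj_sum k (w : 'M_(k, n)) : w = \sum_(i < l.+1) w *m P i.
Proof. by rewrite -mulmx_sumr sum_summand_proj mulmx1. Qed.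

(* Both sides equal [P i y P i], since the summands are [sl2]-stable. *)
Lemma sl2_summand_proj_comm y i : y \in sl2_mats M -> (i <= l)%N -> y *m P i = P i *m y.
Proof.
move=> sl2y le_il; rewrite -ltnS in le_il.
have Py_U j : (j <= l)%N -> (P j *m y <= U j)%MS.
  by move=> le_jl; rewrite (submx_trans (submxMr y (summand_proj_sub l U j))) ?summand_stable.
have kill j k (w : 'M_(k, n)) : (w <= U j)%MS -> (j < l.+1)%N -> j != i -> w *m P i = 0.
  by move=> wU lt_jl neq_ji; rewrite (summand_proj_eq0 (j := j)).
transitivity (P i *m y *m P i).
  rewrite -[y *m P i]mul1mx -sum_summand_proj mulmx_suml (bigD1 (Ordinal le_il)) //=.
  rewrite big1 => [|j neq_ji]; first by rewrite addr0 mulmxA.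
  by rewrite (mulmxA (P j)) (kill j) ?Py_U // -1?ltnS //.
rewrite [RHS](summand_proj_sum (P i *m y)) (bigD1 (Ordinal le_il)) //=.
rewrite big1 => [|j neq_ji]; first by rewrite addr0.
apply: (summand_proj_eq0 (j := i)); rewrite ?Py_U // -1?ltnS //.
by rewrite eq_sym -val_eqE in neq_ji.
Qed.

Lemma partial_sum_proj_eq0 k j r (w : 'M_(r, n)) : (w <= \sum_(i < k) U i)%MS ->
  (k <= j)%N -> (j <= l)%N -> w *m P j = 0.
Proof.
case/sub_sumsmxP => u -> le_kj le_jl; rewrite mulmx_suml big1 // => i _.
rewrite -mulmxA (summand_proj_eq0 (j := i)) ?mulmx0 //.
- by rewrite (leq_trans (ltnW (ltn_ord i))) ?(leq_trans le_kj).
- by rewrite neq_ltn (leq_trans (ltn_ord i)).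
Qed.

Lemma sub_partial_sum_proj k r (w : 'M_(r, n)) : (k <= l)%N ->
  (w <= \sum_(i < k.+1) U i)%MS -> w *m P k = 0 -> (w <= \sum_(i < k) U i)%MS.
Proof.
move=> le_kl wU wPk; rewrite [w]summand_proj_sum summx_sub // => i _.
case: (ltnP i k) => [lt_ik | le_ki].
  apply: submx_trans (submx_trans (submxMl _ _) (summand_proj_sub l U i)) _.
  exact: (sumsmx_sup (Ordinal lt_ik) _ (submx_refl _)).
case: (eqVneq (i : nat) k) => [-> | neq_ik]; first by rewrite wPk sub0mx.
by rewrite (partial_sum_proj_eq0 wU) ?sub0mx // -1?ltnS // ltn_neqAle eq_sym neq_ik.
Qed.

Variables (hM : is_gmod M) (hF : [pchar F] =i pred0) (hm : (1 <= m)%N).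

(* Otherwise [soc^k + U (k+1)] would be a submodule with simple quotient over
   [soc^k], hence contained in [soc^(k+1)]. *)
Lemma summand_gX_proj_neq0 k : (k < l)%N -> ~ (forall s, U k.+1 *m X s *m P k = 0).
Proof.
move=> lt_kl UXP0; have [_ _ _ [soc [hsoc socE]]] := dU.
have socE' j : (j <= l.+1)%N -> (soc j :=: \sum_(i < j) U i)%MS by move/socE/eqmxP.
have not_U_soc : ~~ (U k.+1 <= soc k.+1)%MS.
  rewrite socE' 1?ltnW //; apply: contra (summand_neq0 lt_kl) => U_sum.
  by rewrite -(summand_proj_id lt_kl (submx_refl _)) (partial_sum_proj_eq0 U_sum).
have UX_soc s : (U k.+1 *m X s <= soc k)%MS.
  rewrite socE' ?(leq_trans (leqnSn k)) 1?ltnW //.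
  apply: sub_partial_sum_proj (ltnW lt_kl) _ (UXP0 s).
  rewrite -socE' 1?ltnW //; apply: submx_trans (socle_series_gX hM hF hm hsoc k.+1 s).
  by apply: submxMr; rewrite socE' //; apply: (sumsmx_sup (Ordinal (ltnSn k.+1))).
have st : stable_all (g_mats M) (soc k + U k.+1)%MS.
  have /allP st_soc := socle_series_stable hsoc k.
  apply/allP => y /g_matsP[sl2y | [s ->]]; rewrite addsmxMr.
    by rewrite addsmxS ?st_soc ?summand_stable ?sl2_sub_g_mats.
  by rewrite addsmx_sub (submx_trans (st_soc _ (gX_in_g_mats M s)) (addsmxSl _ _))
    (submx_trans (UX_soc s) (addsmxSl _ _)).
have [_ /(_ k)[le_soc sup _]] := hsoc.
have := simple_over_addsmx (@sl2_sub_g_mats _ _ _ M) (summand_irr lt_kl) st.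
move=> /(_ (contra (fun U_soc => submx_trans U_soc le_soc) not_U_soc))/sup.
by rewrite addsmx_sub (negbTE not_U_soc) andbF.
Qed.

Lemma summand_gX_proj_inj k (u : 'rV[F]_n) : (k < l)%N -> (u <= U k.+1)%MS ->
  (forall s, u *m X s *m P k = 0) -> u = 0.
Proof.
move=> lt_kl uU uXP0; pose K := common_preimmx (U k.+1) (fun s => X s *m P k) 0.
have stK : stable_all (sl2_mats M) K.
  apply/allP => y sl2y; apply: stablemx_common_preimmx.
  - exact: summand_stable.
  - by rewrite mul0mx.
  move=> s; have [c [s' yX]] := gX_ideal hM s (sl2_sub_g_mats sl2y); exists c, s'.
  rewrite mulmxA yX mulmxBl -scalemxAl -!mulmxA.
  by rewrite (sl2_summand_proj_comm sl2y) ?(ltnW lt_kl).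
have [_ _ minU] := summand_irr lt_kl.
have K_X r (w : 'M_(r, n)) : (w <= K)%MS -> forall s, w *m X s *m P k = 0.
  rewrite sub_common_preimmx => /andP[_ /forallP wXP] s.
  by apply/eqP; rewrite -submx0 -mulmxA wXP.
case: (minU K stK (sub0mx _ _) (capmxSl _ _)) => [/andP[K0 _]|/andP[_ UK]].
  apply/eqP; rewrite -submx0; apply: (submx_trans _ K0).
  by rewrite sub_common_preimmx uU; apply/forallP => s; rewrite mulmxA uXP0 sub0mx.
by case: (summand_gX_proj_neq0 lt_kl); apply: K_X.
Qed.

End SocleDecomposition.

Section Tensor.
Variable F : fieldType.

Lemma tensmxDl m n p q (A B : 'M[F]_(m, n)) (C : 'M[F]_(p, q)) :
  (A + B) *t C = A *t C + B *t C.
Proof. by apply/matrixP => i j; rewrite !mxE mulrDl. Qed.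

Lemma tensmxDr m n p q (A : 'M[F]_(m, n)) (B C : 'M[F]_(p, q)) :
  A *t (B + C) = A *t B + A *t C.
Proof. by apply/matrixP => i j; rewrite !mxE mulrDr. Qed.

Lemma tensmx_suml m n p q I (r : seq I) (P : pred I) (A : I -> 'M[F]_(m, n))
    (C : 'M[F]_(p, q)) :
  (\sum_(i <- r | P i) A i) *t C = \sum_(i <- r | P i) (A i *t C).
Proof.
by apply: (big_morph (fun A : 'M_(m, n) => A *t C)) => [A1 A2|]; rewrite ?tensmxDl ?tens0mx.
Qed.

Lemma tensmx_sumr m n p q I (r : seq I) (P : pred I) (A : 'M[F]_(m, n))
    (C : I -> 'M[F]_(p, q)) :
  A *t (\sum_(i <- r | P i) C i) = \sum_(i <- r | P i) (A *t C i).
Proof.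
by apply: (big_morph (fun B : 'M_(p, q) => A *t B)) => [C1 C2|]; rewrite ?tensmxDr ?tensmx0.
Qed.

Lemma tensmx11 n p : (1%:M : 'M[F]_n) *t (1%:M : 'M[F]_p) = 1%:M.
Proof.
apply/matrixP => x y; case: (mxtens_indexP x) => i1 i2; case: (mxtens_indexP y) => j1 j2.
by rewrite tensmxE !mxE -natrM mulnb (can_eq (@mxtens_indexK n p)) xpair_eqE.
Qed.

Lemma tensmxS r n s p r' s' (A : 'M[F]_(r, n)) (B : 'M[F]_(s, p))
    (A' : 'M[F]_(r', n)) (B' : 'M[F]_(s', p)) :
  (A <= A')%MS -> (B <= B')%MS -> (A *t B <= A' *t B')%MS.
Proof. by move=> /submxP[D1 ->] /submxP[D2 ->]; rewrite -tensmx_mul submxMl. Qed.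

Lemma tensmx_mul_id r n p (Y : 'M[F]_(r, n * p)) (A : 'M[F]_n) (B : 'M[F]_p)
    (R1 : 'M[F]_n) (R2 : 'M[F]_p) :
  (Y <= A *t B)%MS -> A *m R1 = A -> B *m R2 = B -> Y *m (R1 *t R2) = Y.
Proof. by case/submxP => D -> AR1 BR2; rewrite -mulmxA tensmx_mul AR1 BR2. Qed.

Lemma sum_mxtens_index (V : nmodType) n p (f : 'I_(n * p) -> V) :
  \sum_k f k = \sum_(i < n) \sum_(j < p) f (mxtens_index (i, j)).
Proof.
rewrite pair_big /=; apply: (reindex (fun ij : 'I_n * 'I_p => @mxtens_index n p (ij.1, ij.2))).
by exists (@mxtens_unindex n p) => [[i j]|k] _ /=; rewrite ?mxtens_indexK ?mxtens_unindexK.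
Qed.

Lemma sum_mul_delta p (f : 'I_p -> F) j : \sum_(j' < p) f j' * (j' == j)%:R = f j.
Proof. by rewrite (bigD1 j) //= eqxx mulr1 big1 ?addr0 // => k /negbTE->; rewrite mulr0. Qed.

Definition rslice n p (v : 'rV[F]_(n * p)) (j : 'I_p) : 'rV[F]_n :=
  \row_i v 0 (mxtens_index (i, j)).
Definition lslice n p (v : 'rV[F]_(n * p)) (i : 'I_n) : 'rV[F]_p :=
  \row_j v 0 (mxtens_index (i, j)).

Lemma rslice_mul n p (v : 'rV[F]_(n * p)) (A : 'M[F]_n) j :
  rslice (v *m (A *t (1%:M : 'M_p))) j = rslice v j *m A.
Proof.
apply/rowP => i'; rewrite !mxE sum_mxtens_index; apply: eq_bigr => i _; rewrite !mxE.
by under eq_bigr => j' _ do rewrite tensmxE mxE mulrA; rewrite sum_mul_delta.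
Qed.

Lemma lslice_mul n p (v : 'rV[F]_(n * p)) (B : 'M[F]_p) i :
  lslice (v *m ((1%:M : 'M_n) *t B)) i = lslice v i *m B.
Proof.
apply/rowP => j'; rewrite !mxE sum_mxtens_index exchange_big; apply: eq_bigr => j _.
rewrite !mxE; under eq_bigr => i' _ do rewrite tensmxE mxE mulrCA mulrC.
by rewrite sum_mul_delta.
Qed.

Lemma rslice_sub r n s p (v : 'rV[F]_(n * p)) (A : 'M[F]_(r, n)) (B : 'M[F]_(s, p)) j :
  (v <= A *t B)%MS -> (rslice v j <= A)%MS.
Proof.
case/submxP => D ->; apply/submxP.
exists (\row_a \sum_(b < s) D 0 (mxtens_index (a, b)) * B b j).
apply/rowP => i; rewrite !mxE sum_mxtens_index; apply: eq_bigr => a _.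
by rewrite !mxE mulr_suml; apply: eq_bigr => b _; rewrite tensmxE mulrA mulrAC.
Qed.

Lemma lslice_sub r n s p (v : 'rV[F]_(n * p)) (A : 'M[F]_(r, n)) (B : 'M[F]_(s, p)) i :
  (v <= A *t B)%MS -> (lslice v i <= B)%MS.
Proof.
case/submxP => D ->; apply/submxP.
exists (\row_b \sum_(a < r) D 0 (mxtens_index (a, b)) * A a i).
apply/rowP => j; rewrite !mxE sum_mxtens_index exchange_big; apply: eq_bigr => b _.
by rewrite !mxE mulr_suml; apply: eq_bigr => a _; rewrite tensmxE mulrA.
Qed.

Lemma rslice_eq0 n p (v : 'rV[F]_(n * p)) : (forall j, rslice v j = 0) -> v = 0.
Proof.
move=> v0; apply/rowP => k; case: (mxtens_indexP k) => i j.
by have /rowP/(_ i) := v0 j; rewrite !mxE.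
Qed.

Lemma lslice_eq0 n p (v : 'rV[F]_(n * p)) : (forall i, lslice v i = 0) -> v = 0.
Proof.
move=> v0; apply/rowP => k; case: (mxtens_indexP k) => i j.
by have /rowP/(_ j) := v0 i; rewrite !mxE.
Qed.

Lemma tens_common_kernel_l r n s p q (A : 'M[F]_(r, n)) (B : 'M[F]_(s, p))
    (Y : 'I_q -> 'M[F]_n) (v : 'rV[F]_(n * p)) :
  (forall u : 'rV_n, (u <= A)%MS -> (forall t, u *m Y t = 0) -> u = 0) ->
  (v <= A *t B)%MS -> (forall t, v *m (Y t *t (1%:M : 'M_p)) = 0) -> v = 0.
Proof.
move=> kerA vAB vY0; apply: rslice_eq0 => j; apply: kerA; first exact: rslice_sub vAB.
by move=> t; rewrite -rslice_mul vY0; apply/rowP => i; rewrite !mxE.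
Qed.

Lemma tens_common_kernel_r r n s p q (A : 'M[F]_(r, n)) (B : 'M[F]_(s, p))
    (Y : 'I_q -> 'M[F]_p) (v : 'rV[F]_(n * p)) :
  (forall u : 'rV_p, (u <= B)%MS -> (forall t, u *m Y t = 0) -> u = 0) ->
  (v <= A *t B)%MS -> (forall t, v *m ((1%:M : 'M_n) *t Y t) = 0) -> v = 0.
Proof.
move=> kerB vAB vY0; apply: lslice_eq0 => i; apply: kerB; first exact: lslice_sub vAB.
by move=> t; rewrite -lslice_mul vY0; apply/rowP => j; rewrite !mxE.
Qed.

End Tensor.

Lemma proj_mx_eq (F : fieldType) n (A B R : 'M[F]_n) :
  (A :&: B)%MS = 0 -> (R <= A)%MS -> (1%:M - R <= B)%MS -> proj_mx A B = R.
Proof.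
move=> AB0 RA RB; rewrite -[proj_mx A B]mul1mx -[1%:M](subrK R) mulmxDl.
by rewrite proj_mx_0 // proj_mx_id // add0r.
Qed.

Section TensorComponents.
Variables (F : fieldType) (m n p : nat) (V : gmod F m n) (W : gmod F m p).
Variables (l l' : nat) (a b : nat -> nat) (UV : nat -> 'M[F]_n) (UW : nat -> 'M[F]_p).
Hypotheses (dV : socle_decomposition V l a UV) (dW : socle_decomposition W l' b UW).
Local Notation PV := (summand_proj l UV).
Local Notation PW := (summand_proj l' UW).

Lemma tcompE i j x : (i <= l)%N -> (j <= l')%N ->
  tcomp l l' UV UW i j x = x *m (PV i *t PW j).
Proof.
move=> le_il le_jl'; rewrite /tcomp le_il le_jl' /=; congr (_ *m _).
set A := UV i *t UW j; set B := (\sum_(ij | _) _)%MS; set R := PV i *t PW j.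
have RA r (Y : 'M_(r, n * p)) : (Y <= A)%MS -> Y *m R = Y.
  move=> YA; apply: (tensmx_mul_id YA).
    by rewrite (summand_proj_id dV le_il).
  by rewrite (summand_proj_id dW le_jl').
have RB r (Y : 'M_(r, n * p)) : (Y <= B)%MS -> Y *m R = 0.
  case/sub_sumsmxP => u ->; rewrite mulmx_suml big1 // => -[i' j'] /= neq_ij.
  rewrite -mulmxA tensmx_mul; case: (eqVneq (i' : nat) i) => [eq_i | neq_i].
    rewrite (summand_proj_eq0 dW (j := j')) ?tensmx0 ?mulmx0 // -1?ltnS //.
    by move: neq_ij; rewrite eq_i xpair_eqE eqxx.
  by rewrite (summand_proj_eq0 dV (j := i')) ?tens0mx ?mulmx0 // -ltnS.
apply: proj_mx_eq; first by rewrite -(RA _ _ (capmxSl A B)) RB ?capmxSr.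
  exact: tensmxS (summand_proj_sub _ _ _) (summand_proj_sub _ _ _).
rewrite -tensmx11 -(sum_summand_proj dV) -(sum_summand_proj dW) tensmx_suml.
under eq_bigr do rewrite tensmx_sumr.
rewrite pair_big (bigD1 (Ordinal (le_il : (i < l.+1)%N), Ordinal (le_jl' : (j < l'.+1)%N))) //=.
rewrite addrC addrK summx_sub // => -[i' j'] neq_ij.
apply: submx_trans (tensmxS (summand_proj_sub _ _ _) (summand_proj_sub _ _ _)) _.
by apply: (sumsmx_sup (i', j')) => //=.
Qed.

Lemma tcomp_tens_gX_l i k j s v : (i <= l)%N -> (k <= l)%N -> i != k -> (j <= l')%N ->
  (v <= UV i *t UW j)%MS ->
  tcomp l l' UV UW k j (v *m gX (tens V W) s) = v *m ((gX V s *m PV k) *t 1%:M).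
Proof.
move=> le_il le_kl neq_ik le_jl' vU.
have vPV : v *m (PV i *t 1%:M) = v.
  by apply: (tensmx_mul_id vU); rewrite ?mulmx1 ?(summand_proj_id dV le_il).
have vPW : v *m (1%:M *t PW j) = v.
  by apply: (tensmx_mul_id vU); rewrite ?mulmx1 ?(summand_proj_id dW le_jl').
rewrite tcompE // mulmxDr mulmxDl -!mulmxA !tensmx_mul !mul1mx.
rewrite -[v in v *m (PV k *t _)]vPV -mulmxA tensmx_mul mul1mx.
rewrite (summand_proj_eq0 dV le_kl le_il neq_ik (summand_proj_sub _ _ _)) tens0mx mulmx0 addr0.
by rewrite -[v in RHS]vPW -mulmxA tensmx_mul mul1mx mulmx1.
Qed.

Lemma tcomp_tens_gX_r i j k s v : (i <= l)%N -> (j <= l')%N -> (k <= l')%N -> j != k ->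
  (v <= UV i *t UW j)%MS ->
  tcomp l l' UV UW i k (v *m gX (tens V W) s) = v *m (1%:M *t (gX W s *m PW k)).
Proof.
move=> le_il le_jl' le_kl' neq_jk vU.
have vPV : v *m (PV i *t 1%:M) = v.
  by apply: (tensmx_mul_id vU); rewrite ?mulmx1 ?(summand_proj_id dV le_il).
have vPW : v *m (1%:M *t PW j) = v.
  by apply: (tensmx_mul_id vU); rewrite ?mulmx1 ?(summand_proj_id dW le_jl').
rewrite tcompE // mulmxDr mulmxDl -!mulmxA !tensmx_mul !mul1mx.
rewrite -[v in v *m (_ *t PW k)]vPW -mulmxA tensmx_mul mul1mx.
rewrite (summand_proj_eq0 dW le_kl' le_jl' neq_jk (summand_proj_sub _ _ _)) tensmx0 mulmx0 add0r.
by rewrite -[v in RHS]vPV -mulmxA tensmx_mul mul1mx mulmx1.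
Qed.

Variables (hV : is_gmod V) (hW : is_gmod W) (hF : [pchar F] =i pred0) (hm : (1 <= m)%N).

Lemma tcomp_tens_gX_eq0_l k j v : (k < l)%N -> (j <= l')%N -> (v <= UV k.+1 *t UW j)%MS ->
  (forall s, tcomp l l' UV UW k j (v *m gX (tens V W) s) = 0) -> v = 0.
Proof.
move=> lt_kl le_jl' vU comp0.
apply: (tens_common_kernel_l (Y := fun s => gX V s *m PV k) _ vU).
  by move=> u uU uY0; apply: (summand_gX_proj_inj dV hV hF hm lt_kl uU) => s; rewrite -mulmxA.
by move=> s; rewrite -(tcomp_tens_gX_l s _ _ _ _ vU) ?comp0 ?(ltnW lt_kl) // gtn_eqF.
Qed.

Lemma tcomp_tens_gX_eq0_r i k v : (i <= l)%N -> (k < l')%N -> (v <= UV i *t UW k.+1)%MS ->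
  (forall s, tcomp l l' UV UW i k (v *m gX (tens V W) s) = 0) -> v = 0.
Proof.
move=> le_il lt_kl' vU comp0.
apply: (tens_common_kernel_r (Y := fun s => gX W s *m PW k) _ vU).
  by move=> u uU uY0; apply: (summand_gX_proj_inj dW hW hF hm lt_kl' uU) => s; rewrite -mulmxA.
by move=> s; rewrite -(tcomp_tens_gX_r s _ _ _ _ vU) ?comp0 ?(ltnW lt_kl') // gtn_eqF.
Qed.

End TensorComponents.

Unset Implicit Arguments.

Theorem lemma3p1 (F : fieldType) (hF : [pchar F] =i pred0) (m : nat)
  (hm : (1 <= m)%N) (n p : nat) (V : gmod F m n) (W : gmod F m p)
  (hV : is_gmod V) (hW : is_gmod W) (uV : uniserial V) (uW : uniserial W)
  (l l' : nat) (hl : (1 <= l)%N) (hl' : (1 <= l')%N)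
  (a b : nat -> nat) (UV : nat -> 'M[F]_n) (UW : nat -> 'M[F]_p)
  (dV : socle_decomposition V l a UV) (dW : socle_decomposition W l' b UW)
  (i0 j0 : nat) (hi0 : (i0 <= l)%N) (hj0 : (j0 <= l')%N)
  (v0 : 'rV[F]_(n * p)) (hv0 : (v0 <= UV i0 *t UW j0)%MS)
  (hw : highest_weight (tens V W) v0) :
  (i0 = 0%N <-> forall s : 'I_m.+1,
      comp1 l l' UV UW i0 j0 (v0 *m gX (tens V W) s) = 0) /\
  (j0 = 0%N <-> forall s : 'I_m.+1,
      comp2 l l' UV UW i0 j0 (v0 *m gX (tens V W) s) = 0).
Proof.
have [v0_neq0 _ _] := hw.
split; split=> [-> // | comp0].
  case: i0 hi0 hv0 comp0 => // k lt_kl hv0 comp0; case/eqP: v0_neq0.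
  exact: (tcomp_tens_gX_eq0_l dV dW hV hF hm lt_kl hj0 hv0).
case: j0 hj0 hv0 comp0 => // k lt_kl' hv0 comp0; case/eqP: v0_neq0.
exact: (tcomp_tens_gX_eq0_r dV dW hW hF hm hi0 lt_kl' hv0).
Qed.
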